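(* A C*-algebra $A$ possesses a quasi-identity if and only if $A$ is unital. In this case, the identity is the only quasi-identity of $A$.
   Context: A quasi-identity of a ring $R$ is an element $e\in R$ with $r=er+re-ere$ for all $r\in R$. *)

From HB Require Import structures.
From mathcomp Require Import all_boot all_order all_algebra.
From mathcomp Require Import complex.
From mathcomp Require Import all_classical all_reals all_analysis.
Set Implicit Arguments. Unset Strict Implicit. Unset Printing Implicit Defensive.
Import Order.TTheory GRing.Theory Num.Theory.
Local Open Scope ring_scope.
Local Open Scope complex_scope.

Record is_Cstar_algebra (R : realType) (A : completeNormedModType R[i])
    (mul : A -> A -> A) (star : A -> A) : Prop := {
  Cs_mulA : forall x y z, mul (mul x y) z = mul x (mul y z);
  Cs_mulDl : forall x y z, mul (x + y) z = mul x z + mul y z;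
  Cs_mulDr : forall x y z, mul x (y + z) = mul x y + mul x z;
  Cs_mulZl : forall (a : R[i]) x y, mul (a *: x) y = a *: mul x y;
  Cs_mulZr : forall (a : R[i]) x y, mul x (a *: y) = a *: mul x y;
  Cs_normM : forall x y, `|mul x y| <= `|x| * `|y|;
  Cs_starD : forall x y, star (x + y) = star x + star y;
  Cs_starZ : forall (a : R[i]) x, star (a *: x) = a^* *: star x;
  Cs_starK : forall x, star (star x) = x;
  Cs_starM : forall x y, star (mul x y) = mul (star y) (star x);
  Cs_Cstar : forall x, `|mul (star x) x| = `|x| ^+ 2
}.

Definition quasi_identity (A : zmodType) (mul : A -> A -> A) (e : A) : Prop :=
  forall r, r = mul e r + mul r e - mul (mul e r) e.

Definition is_identity (A : Type) (mul : A -> A -> A) (u : A) : Prop :=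
  forall r, mul u r = r /\ mul r u = r.

Definition unital (A : Type) (mul : A -> A -> A) : Prop :=
  exists u, is_identity mul u.

From HB Require Import structures.
From mathcomp Require Import all_boot all_order all_algebra.
From mathcomp Require Import complex.
From mathcomp Require Import all_classical all_reals all_analysis.
Import Order.TTheory GRing.Theory Num.Theory.
Set Implicit Arguments. Unset Strict Implicit. Unset Printing Implicit Defensive.
Local Open Scope ring_scope.
Local Open Scope complex_scope.

(* A C*-algebra is semiprime: if x A x = 0 then (x^* x)^* (x^* x) = 0, and the
   C*-identity applied twice gives x = 0.  In the unitization, e is a
   quasi-identity iff (1 - e) A (1 - e) = 0; then (1 - e) a A (1 - e) a = 0 and
   a (1 - e) A a (1 - e) = 0, so semiprimeness forces a = e a = a e. *)

Definition semiprime (V : zmodType) (mul : V -> V -> V) : Prop :=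
  forall x, (forall y, mul (mul x y) x = 0) -> x = 0.

Lemma is_identity_quasi_identity (V : zmodType) (mul : V -> V -> V) (u : V) :
  is_identity mul u -> quasi_identity mul u.
Proof. by move=> Hu r; have [-> ->] := Hu r; rewrite addrK. Qed.

Lemma is_identity_unique (T : Type) (mul : T -> T -> T) (u e : T) :
  is_identity mul u -> is_identity mul e -> e = u.
Proof. by move=> Hu He; have [_ <-] := Hu e; have [-> _] := He u. Qed.

Section SemiprimeQuasiIdentity.
Variables (V : zmodType) (mul : V -> V -> V).
Hypothesis mulA : forall x y z, mul (mul x y) z = mul x (mul y z).
Hypothesis mulDl : forall x y z, mul (x + y) z = mul x z + mul y z.
Hypothesis mulDr : forall x y z, mul x (y + z) = mul x y + mul x z.

Lemma mul0l x : mul 0 x = 0.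
Proof. by apply: (addrI (mul 0 x)); rewrite -mulDl !addr0. Qed.

Lemma mul0r x : mul x 0 = 0.
Proof. by apply: (addrI (mul x 0)); rewrite -mulDr !addr0. Qed.

Lemma mulNl x y : mul (- x) y = - mul x y.
Proof. by apply: (addIr (mul x y)); rewrite -mulDl !addNr mul0l. Qed.

Lemma mulNr x y : mul x (- y) = - mul x y.
Proof. by apply: (addIr (mul x y)); rewrite -mulDr !addNr mul0r. Qed.

Definition quasi_defect (e r : V) : V :=
  r - (mul e r + mul r e - mul (mul e r) e).

Lemma quasi_identityP e :
  quasi_identity mul e <-> forall r, quasi_defect e r = 0.
Proof.
split=> Q r; first by apply/eqP; rewrite subr_eq0 -Q.
by apply/eqP; rewrite -subr_eq0; apply/eqP/Q.
Qed.

Lemma mul_quasi_defectl e a y :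
  mul (mul (a - mul e a) y) (a - mul e a) = mul (quasi_defect e (mul a y)) a.
Proof.
by rewrite /quasi_defect !(mulDl, mulDr, mulNl, mulNr, opprD, opprK) !mulA !addrA.
Qed.

Lemma mul_quasi_defectr e a y :
  mul (mul (a - mul a e) y) (a - mul a e) = mul a (quasi_defect e (mul y a)).
Proof.
by rewrite /quasi_defect !(mulDl, mulDr, mulNl, mulNr, opprD, opprK) !mulA !addrA.
Qed.

Lemma semiprime_quasi_identity e :
  semiprime mul -> quasi_identity mul e -> is_identity mul e.
Proof.
move=> semiprime_mul /quasi_identityP Q a; split.
  apply/esym/eqP; rewrite -subr_eq0; apply/eqP/semiprime_mul => y.
  by rewrite mul_quasi_defectl Q mul0l.
apply/esym/eqP; rewrite -subr_eq0; apply/eqP/semiprime_mul => y.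
by rewrite mul_quasi_defectr Q mul0r.
Qed.

End SemiprimeQuasiIdentity.

Section Cstar.
Variables (R : realType) (A : completeNormedModType R[i]).
Variables (mul : A -> A -> A) (star : A -> A).
Hypothesis HA : is_Cstar_algebra mul star.

Lemma Cstar_mul_eq0 x : mul (star x) x = 0 -> x = 0.
Proof.
move=> x0; apply/normr0_eq0/eqP; rewrite -sqrf_eq0 -(Cs_Cstar HA) x0.
by rewrite normr0.
Qed.

Lemma Cstar_semiprime : semiprime mul.
Proof.
move=> x xAx0; apply/Cstar_mul_eq0/Cstar_mul_eq0.
rewrite (Cs_starM HA) (Cs_starK HA) (Cs_mulA HA) -(Cs_mulA HA x) xAx0.
exact: mul0r (Cs_mulDr HA) _.
Qed.

Lemma Cstar_quasi_identity e : quasi_identity mul e -> is_identity mul e.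
Proof.
exact: (semiprime_quasi_identity (Cs_mulA HA) (Cs_mulDl HA) (Cs_mulDr HA)
  (@Cstar_semiprime)).
Qed.

End Cstar.

Theorem proposition4p5 (R : realType) (A : completeNormedModType R[i])
    (mul : A -> A -> A) (star : A -> A)
    (HA : is_Cstar_algebra mul star) :
  ((exists e : A, quasi_identity mul e) <-> unital mul) /\
  (forall u : A, is_identity mul u ->
     forall e : A, quasi_identity mul e -> e = u).
Proof.
have qi_id := Cstar_quasi_identity HA.
split; first split.
- by case=> e /qi_id; exists e.
- by case=> u /is_identity_quasi_identity; exists u.
- by move=> u Hu e /qi_id; apply: is_identity_unique.
Qed.
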